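(* Let $G$ be a graph and $k$ an integer, and assume: (A) $G$ contains no two adjacent vertices $u,w$ with $N(w)\subseteq N[u]$; and (B) there is no vertex $w$ of $G$ together with a partition $(C_1,C_2)$ of $N(w)$ such that $|C_1|\ge|C_2|$, $C_1$ and $C_2$ are cliques, and every vertex $c_1\in C_1$ lies in exactly one pair $\{c_1,c_2\}$ with $c_2\in C_2$ and $\{c_1,c_2\}\notin E(G)$. Let $v$ be a vertex of degree four such that $G[N(v)]$ has at least three edges. Then $G[N(v)]$ is a path. Moreover, writing $N(v)=\{a,b,c,d\}$ so that $G[N(v)]$ is the path $a-b-c-d$, let $G'$ be the graph with vertex set $V(G)\setminus\{v\}$ whose edge set consists of the edges of $G-v$ together with the set $F$ consisting of all pairs of distinct vertices of $N(v)$, all pairs $\{x,y\}$ with $x\in\{a,b\}$ and $y\in N(d)$, and all pairs $\{x,y\}$ with $x\in\{c,d\}$ and $y\in N(a)$ (pairs containing $v$ being omitted). Then $G$ has a vertex cover of size $k$ if and only if $G'$ has a vertex cover of size $k$.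
   Context: All graphs are finite, simple, undirected. $N(x)$ is the open and $N[x]=N(x)\cup\{x\}$ the closed neighborhood; $G[X]$ is the subgraph induced by $X$. A clique is a set of pairwise adjacent vertices. A vertex cover is a set of vertices containing at least one endpoint of every edge; ''has a vertex cover of size $k$'' means has a vertex cover of size at most $k$. *)

From mathcomp Require Import all_boot all_order all_algebra.
Set Implicit Arguments. Unset Strict Implicit. Unset Printing Implicit Defensive.
Import GRing.Theory Num.Theory.

Definition simple_graph (T : finType) (e : rel T) : Prop :=
  symmetric e /\ irreflexive e.

Definition nbh (T : finType) (e : rel T) (x : T) : {set T} := [set y | e x y].
Definition cnbh (T : finType) (e : rel T) (x : T) : {set T} := x |: nbh e x.

Definition is_clique (T : finType) (e : rel T) (C : {set T}) : Prop :=
  forall x y, x \in C -> y \in C -> x != y -> e x y.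

Definition is_vertex_cover (T : finType) (e : rel T) (S : {set T}) : Prop :=
  forall x y, e x y -> (x \in S) || (y \in S).
Definition has_vc (T : finType) (e : rel T) (k : int) : Prop :=
  exists S : {set T}, is_vertex_cover e S /\ (#|S|%:Z <= k)%R.

Definition condA (T : finType) (e : rel T) : Prop :=
  ~ exists u w, e u w /\ nbh e w \subset cnbh e u.

Definition condB (T : finType) (e : rel T) : Prop :=
  ~ exists w (C1 C2 : {set T}),
      [/\ [/\ C1 :|: C2 = nbh e w, [disjoint C1 & C2] & #|C2| <= #|C1|],
          is_clique e C1, is_clique e C2 &
          forall c1, c1 \in C1 -> #|[set c2 in C2 | ~~ e c1 c2]| = 1].

Definition induced_edges (T : finType) (e : rel T) (X : {set T}) : nat :=
  #|[set [set x; y] | x in X, y in X & e x y]|.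

Definition induced_P4 (T : finType) (e : rel T) (X : {set T}) (a b c d : T) : Prop :=
  [/\ uniq [:: a; b; c; d], X = [set a; b; c; d],
      [/\ e a b, e b c & e c d] & [/\ ~~ e a c, ~~ e a d & ~~ e b d]].

Definition is_path_graph_induced (T : finType) (e : rel T) (X : {set T}) : Prop :=
  exists a b c d, induced_P4 e X a b c d.

Definition Fpair (T : finType) (e : rel T) (v a b c d : T) (x y : T) : bool :=
  [|| (x \in nbh e v) && (y \in nbh e v),
      (x \in [set a; b]) && (y \in nbh e d),
      (y \in [set a; b]) && (x \in nbh e d),
      (x \in [set c; d]) && (y \in nbh e a)
    | (y \in [set c; d]) && (x \in nbh e a)].

Definition Vminus (T : finType) (v : T) : finType := {x : T | x != v}.

Definition Gprime_rel (T : finType) (e : rel T) (v a b c d : T) : rel (Vminus v) :=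
  fun x y => (val x != val y) && (e (val x) (val y) || Fpair e v a b c d (val x) (val y)).
Arguments Gprime_rel {T} e v a b c d.

(* By (A), no vertex of N(v) is adjacent to the other three; by (B) applied at
   w = v, G[N(v)] is neither a 4-cycle (C1, C2 two opposite edges) nor a
   triangle plus an isolated vertex (C2 the isolated vertex). The only other
   graph on four vertices with at least three edges is the path a - b - c - d.

   A vertex cover S of G avoiding v contains N(v) and already covers G'.
   Otherwise exchanging v for a (if a is not in S), for d (if d is not in S),
   or else for whichever of b, c is missing, yields a vertex cover of G' that
   is no larger. Conversely, a vertex cover S of G' omits at most one vertex z
   of the clique N(v); if z lies in {c, d} (resp. {a, b}), the pairs of F
   force N(a) - v (resp. N(d) - v) into S, and exchanging a (resp. d) for v
   gives a vertex cover of G. *)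

From mathcomp Require Import all_boot all_order all_algebra.
Set Implicit Arguments. Unset Strict Implicit. Unset Printing Implicit Defensive.
Import Order.TTheory GRing.Theory Num.Theory.

Lemma card_exchange (T : finType) (S : {set T}) (x w : T) :
  w \in S -> #|x |: (S :\ w)| <= #|S|.
Proof. by move=> wS; rewrite cardsU1 (cardsD1 w S) wS leq_add2r leq_b1. Qed.

Lemma cards4_enum (T : finType) (X : {set T}) :
  #|X| = 4 -> exists p q r s, uniq [:: p; q; r; s] /\ X = [set p; q; r; s].
Proof.
rewrite cardE => cardX; have := enum_uniq (mem X); have := mem_enum (mem X).
move: cardX; case: (enum _) => [|p [|q [|r [|s [|]]]]] //= _ memX uniqX.
exists p, q, r, s; split=> //.
by apply/setP => x; rewrite -[x \in X]memX !inE -!orbA.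
Qed.

Lemma card_nonadj_eq1 (T : finType) (e : rel T) (C : {set T}) x z :
  z \in C -> ~~ e x z -> {in C, forall y, y != z -> e x y} ->
  #|[set y in C | ~~ e x y]| = 1.
Proof.
move=> zC xz adj; apply/eqP/cards1P; exists z; apply/setP => y; rewrite !inE.
have [->|yz] := eqVneq y z; first by rewrite zC xz.
by case yC: (y \in C); rewrite //= adj.
Qed.

Lemma clique_cover4 (T : finType) (S : {set T}) (x y z w : T) :
  x \in S -> y \in S -> (z \in S) || (w \in S) ->
  {in [set x; y; z; w] &, forall u u', u != u' -> (u \in S) || (u' \in S)}.
Proof.
move=> xS yS zwS u u'; rewrite !inE -!orbA.
case/or4P=> /eqP-> /or4P[]/eqP->; rewrite ?xS ?yS ?eqxx ?orbT //.
by rewrite orbC.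
Qed.

Definition del_vertex (T : finType) (r : rel T) (v : T) : rel T :=
  fun x y => [&& x != v, y != v & r x y].

Lemma has_vc_Vminus (T : finType) (r : rel T) (v : T) (k : int) :
  has_vc (fun x y : Vminus v => r (val x) (val y)) k <-> has_vc (del_vertex r v) k.
Proof.
split=> -[S [coverS leSk]].
- exists (val @: S); split; last by rewrite card_imset //; exact: val_inj.
  move=> x y /and3P[xv yv rxy].
  have [xS|yS] := orP (coverS (Sub x xv) (Sub y yv) rxy).
    by rewrite (imset_f val xS).
  by rewrite (imset_f val yS) orbT.
- exists [set x : Vminus v | val x \in S]; split.
    move=> x y rxy; rewrite !inE; apply: coverS.
    by rewrite /del_vertex (valP x) (valP y).
  apply: le_trans leSk; rewrite lez_nat -(card_imset _ val_inj).
  by apply/subset_leq_card/subsetP => y /imsetP[x]; rewrite inE => xS ->.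
Qed.

Lemma has_vc_transfer (T T' : finType) (r : rel T) (r' : rel T') (k : int) :
  (forall S, is_vertex_cover r S -> exists2 S', is_vertex_cover r' S' & #|S'| <= #|S|) ->
  has_vc r k -> has_vc r' k.
Proof.
move=> smaller [S [/smaller[S' coverS' leS'S] leSk]]; exists S'; split=> //.
by apply: le_trans leSk; rewrite lez_nat.
Qed.

Section VertexCover.
Variables (T : finType) (e : rel T).
Hypotheses (e_sym : symmetric e) (e_irr : irreflexive e).

Lemma nbh_neq v x : x \in nbh e v -> x != v.
Proof. by rewrite inE; apply: contraTneq => ->; rewrite e_irr. Qed.

Lemma nbh_subset_cover S v : is_vertex_cover e S -> v \notin S -> nbh e v \subset S.
Proof.
by move=> coverS vS; apply/subsetP => x; rewrite inE => /coverS; rewrite (negbTE vS).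
Qed.

Lemma del_vertex_cover S v : is_vertex_cover e S -> is_vertex_cover (del_vertex e v) S.
Proof. by move=> coverS x y /and3P[_ _ /coverS]. Qed.

Lemma del_vertex_cover_exchange S v x :
  is_vertex_cover e S -> is_vertex_cover (del_vertex e v) (x |: S :\ v).
Proof.
move=> coverS y z /and3P[yv zv /coverS/orP[yS|zS]].
  by rewrite !inE yv yS orbT.
by rewrite !inE zv zS !orbT.
Qed.

Lemma cover_of_del_cover_nbh S v :
  is_vertex_cover (del_vertex e v) S -> nbh e v \subset S -> is_vertex_cover e S.
Proof.
move=> coverS /subsetP NvS x y exy.
have [xv|xv] := eqVneq x v; first by rewrite (NvS y) ?orbT // inE -xv.
have [yv|yv] := eqVneq y v; first by rewrite (NvS x) // inE -yv e_sym.
by apply: coverS; rewrite /del_vertex xv yv.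
Qed.

Lemma cover_exchange S v w :
  is_vertex_cover (del_vertex e v) S -> nbh e w :\ v \subset S ->
  is_vertex_cover e (v |: S :\ w).
Proof.
move=> coverS /subsetP NwS.
have cover_from u u' : e u u' -> u' != v -> u \in S -> (u \in S :\ w) || (u' \in S :\ w).
  move=> euu' u'v uS; have [uw|uw] := eqVneq u w; last by rewrite !inE uw uS.
  have u'S : u' \in S by rewrite NwS // !inE u'v -uw.
  rewrite !inE u'S andbT; apply/orP; right.
  by apply: contraTneq euu' => ->; rewrite uw e_irr.
move=> x y exy; rewrite !in_setU1.
have [//|xv] := eqVneq x v; have [|yv] := eqVneq y v; first by rewrite orbT.
have /orP[xS|yS] : (x \in S) || (y \in S) by apply: coverS; rewrite /del_vertex xv yv.
  exact: cover_from.
by rewrite /= orbC cover_from 1?e_sym.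
Qed.

End VertexCover.

Section NeighbourhoodOfDegreeFour.
Variables (T : finType) (e : rel T) (v : T).
Hypotheses (e_sym : symmetric e) (e_irr : irreflexive e).

Lemma induced_edges_set4 p q r s :
  induced_edges e [set p; q; r; s] <= e p q + e p r + e p s + e q r + e q s + e r s.
Proof.
pose E := [seq xy <- [:: (p, q); (p, r); (p, s); (q, r); (q, s); (r, s)] | e xy.1 xy.2].
have pairE x y : ((x, y) \in E) || ((y, x) \in E) ->
    [set x; y] \in [set [set xy.1; xy.2] | xy in E].
  by case/orP=> /(imset_f (fun xy => [set xy.1; xy.2])) //=; rewrite setUC.
apply: (@leq_trans #|[set [set xy.1; xy.2] | xy in E]|).
  apply/subset_leq_card/subsetP => P /imset2P[x y xX]; rewrite inE => /andP[yX exy] ->.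
  move: xX yX exy; rewrite !inE -!orbA.
  move=> /or4P[]/eqP-> /or4P[]/eqP->; rewrite ?e_irr // => exy;
    have := exy; rewrite e_sym => eyx; by apply: pairE; rewrite !mem_filter /= exy eyx /= !inE !eqxx /= ?orbT.
apply: leq_trans (leq_imset_card _ _) _; apply: leq_trans (card_size _) _.
by rewrite size_filter /= !addnA addn0.
Qed.

Hypotheses (hA : condA e) (hB : condB e).

Lemma nbh4_no_dominating x y z w :
  e x y -> e x z -> e x w -> nbh e v = [set x; y; z; w] -> False.
Proof.
move=> xy xz xw Nv; apply: hA; exists x, v; split.
  have : x \in nbh e v by rewrite Nv !inE eqxx.
  by rewrite inE e_sym.
by rewrite Nv /cnbh !subUset !sub1set !inE eqxx xy xz xw ?orbT.
Qed.

Lemma nbh4_no_C4 x y z w :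
  e x y -> e y z -> e z w -> e w x -> ~~ e x z -> ~~ e y w ->
  nbh e v = [set x; y; z; w] -> uniq [:: x; y; z; w] -> False.
Proof.
move=> xy yz zw wx xz yw Nv U; apply: hB; exists v, [set x; y], [set z; w].
move: U; rewrite /= !inE !negb_or => /and4P[/and3P[x_y x_z x_w] /andP[y_z y_w] z_w _].
split.
- split; first by rewrite Nv setUA.
    by rewrite disjoints_subset !subUset !sub1set !inE !negb_or x_z x_w y_z y_w.
  by rewrite !cards2 x_y z_w.
- by move=> u u'; rewrite !inE => /orP[]/eqP-> /orP[]/eqP->; rewrite ?eqxx // e_sym.
- by move=> u u'; rewrite !inE => /orP[]/eqP-> /orP[]/eqP->; rewrite ?eqxx // e_sym.
- move=> u; rewrite !inE => /orP[]/eqP->.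
    apply: card_nonadj_eq1 xz _; first by rewrite !inE eqxx.
    by move=> u'; rewrite !inE => /orP[]/eqP->; rewrite ?eqxx // e_sym.
  apply: card_nonadj_eq1 yw _; first by rewrite !inE eqxx orbT.
  by move=> u'; rewrite !inE => /orP[]/eqP->; rewrite ?eqxx.
Qed.

Lemma nbh4_no_K3K1 x y z w :
  e x y -> e y z -> e z x -> ~~ e x w -> ~~ e y w -> ~~ e z w ->
  nbh e v = [set x; y; z; w] -> uniq [:: x; y; z; w] -> False.
Proof.
move=> xy yz zx xw yw zw Nv U; apply: hB; exists v, [set x; y; z], [set w].
move: U; rewrite /= !inE !negb_or => /and4P[/and3P[_ _ x_w] /andP[_ y_w] z_w _].
split.
- split=> //; first by rewrite disjoints_subset !subUset !sub1set !inE x_w y_w z_w.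
  by rewrite cards1 (cardsD1 x) !inE eqxx.
- by move=> u u'; rewrite !inE -!orbA => /or3P[]/eqP-> /or3P[]/eqP->; rewrite ?eqxx // e_sym.
- by move=> u u'; rewrite !inE => /eqP-> /eqP->; rewrite eqxx.
- move=> u uC; apply: card_nonadj_eq1; rewrite ?inE ?eqxx //.
    by move: uC; rewrite !inE -!orbA => /or3P[]/eqP->.
  by move=> u'; rewrite inE => /eqP->; rewrite eqxx.
Qed.

Ltac edges := by repeat match goal with H : e _ _ = _ |- _ => rewrite H end.
Ltac relabel := match goal with Nv : nbh e v = [set ?p; ?q; ?r; ?s] |- _ =>
  by rewrite Nv; apply/setP => u; rewrite !inE;
     case: (_ == p); case: (_ == q); case: (_ == r); case: (_ == s) end.
Ltac distinct := by rewrite /= !inE !negb_or;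
  repeat match goal with H : is_true (_ != _) |- _ => rewrite H end.
Ltac dominating x y z w :=
  exfalso; apply: (@nbh4_no_dominating x y z w); [edges .. | relabel].
Ltac C4 x y z w := exfalso; apply: (@nbh4_no_C4 x y z w); [edges .. | relabel | distinct].
Ltac K3K1 x y z w := exfalso; apply: (@nbh4_no_K3K1 x y z w); [edges .. | relabel | distinct].
Ltac path4 x y z w :=
  exists x, y, z, w; split; [idtac | idtac | split; edges ..]; [distinct | relabel].

Lemma nbh_induced_P4 : #|nbh e v| = 4 -> 3 <= induced_edges e (nbh e v) ->
  is_path_graph_induced e (nbh e v).
Proof.
case/cards4_enum=> p [q [r [s [U Nv]]]].
rewrite {1}Nv => /leq_trans/(_ (induced_edges_set4 p q r s)) three_edges.
have := U; rewrite /= !inE !negb_or => /and4P[/and3P[pq pr ps] /andP[qr qs] rs _].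
have [qp rp sp] : [/\ q != p, r != p & s != p] by rewrite !(eq_sym _ p).
have [rq sq sr] : [/\ r != q, s != q & s != r] by rewrite !(eq_sym _ q) (eq_sym s r).
move: three_edges (e_sym q p) (e_sym r p) (e_sym s p) (e_sym r q) (e_sym s q) (e_sym s r).
(* All 64 graphs on {p, q, r, s}; paths are listed up to reversal. *)
case Epq: (e p q); case Epr: (e p r); case Eps: (e p s);
case Eqr: (e q r); case Eqs: (e q s); case Ers: (e r s) => // _ Eqp Erp Esp Erq Esq Esr;
first [ dominating p q r s | dominating q p r s | dominating r p q s | dominating s p q r
      | C4 p q r s | C4 p q s r | C4 p r q s
      | K3K1 p q r s | K3K1 p q s r | K3K1 p r s q | K3K1 q r s p
      | path4 p q r s | path4 p q s r | path4 p r q s | path4 p r s q | path4 p s q r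
      | path4 p s r q | path4 q p r s | path4 q p s r | path4 q r p s | path4 q s p r
      | path4 r p q s | path4 r q p s ].
Qed.

End NeighbourhoodOfDegreeFour.

(* [Gprime_rel e v a b c d] is [plusF e v a b c d] read on [Vminus v]. *)
Definition plusF (T : finType) (e : rel T) (v a b c d : T) : rel T :=
  fun x y => (x != y) && (e x y || Fpair e v a b c d x y).

Section ReductionF.
Variables (T : finType) (e : rel T) (v a b c d : T).
Hypotheses (e_sym : symmetric e) (e_irr : irreflexive e).
Hypothesis Nv : nbh e v = [set a; b; c; d].
Hypotheses (ac : ~~ e a c) (ad : ~~ e a d) (bd : ~~ e b d).

Local Notation Gplus := (del_vertex (plusF e v a b c d) v).

Lemma abcd_neq_v : [/\ a != v, b != v, c != v & d != v].
Proof.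
have neq x : x \in nbh e v -> x != v by apply: nbh_neq.
by rewrite !neq // Nv !inE eqxx ?orbT.
Qed.

Lemma plusF_coverP S :
  is_vertex_cover Gplus S <->
  [/\ is_vertex_cover (del_vertex e v) S,
      {in nbh e v &, forall x y, x != y -> (x \in S) || (y \in S)},
      ([set a; b] \subset S) || (nbh e d :\ v \subset S) &
      ([set c; d] \subset S) || (nbh e a :\ v \subset S)].
Proof.
have [av bv cv dv] := abcd_neq_v.
have cover_end (P : {set T}) u x y : (P \subset S) || (nbh e u :\ v \subset S) ->
    x \in P -> y \in nbh e u -> y != v -> (x \in S) || (y \in S).
  move=> /orP[/subsetP PS | /subsetP PS] xP uy yv; first by rewrite (PS x).
  by rewrite (PS y) ?orbT // in_setD1 yv uy.
split=> [coverS | [coverS cliqueS endab endcd] x y].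
  have far_end (P : {set T}) u : {in P, forall x, (x != v) && ~~ e u x} ->
      (forall x y, x \in P -> y \in nbh e u -> Fpair e v a b c d x y) ->
      (P \subset S) || (nbh e u :\ v \subset S).
    move=> Pu PF; case: (boolP (P \subset S)) => //= /subsetPn[x xP xS].
    apply/subsetP => y /setD1P[yv uy]; have /andP[xv ux] := Pu x xP.
    have: (x \in S) || (y \in S); last by rewrite (negbTE xS).
    apply: coverS; rewrite /del_vertex /plusF xv yv PF // orbT andbT.
    by apply: contraNneq ux => ->; rewrite inE in uy.
  split.
  - move=> x y /and3P[xv yv exy]; apply: coverS.
    rewrite /del_vertex xv yv /plusF exy andbT.
    by apply: contraTneq exy => ->; rewrite e_irr.
  - move=> x y xN yN xy; apply: coverS.
    by rewrite /del_vertex (nbh_neq e_irr xN) (nbh_neq e_irr yN) /plusF xy /Fpair xN yN orbT.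
  - apply: far_end => [x | x y xP dy]; last by rewrite /Fpair xP dy orbT.
    by rewrite !inE => /orP[]/eqP->; rewrite e_sym ?av ?bv ?ad ?bd.
  - apply: far_end => [x | x y xP ay]; last by rewrite /Fpair xP ay !orbT.
    by rewrite !inE => /orP[]/eqP->; rewrite ?cv ?dv ?ac ?ad.
case/and3P=> xv yv /andP[xy /orP[exy | ]].
  by apply: coverS; rewrite /del_vertex xv yv exy.
rewrite /Fpair => /or4P[/andP[xN yN] | /andP[xP dy] | /andP[yP dx] | /orP[]/andP[]].
- exact: cliqueS.
- exact: cover_end endab xP dy yv.
- by rewrite orbC; apply: cover_end endab yP dx xv.
- by move=> xP ay; apply: cover_end endcd xP ay yv.
- by move=> yP ax; rewrite orbC; apply: cover_end endcd yP ax xv.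
Qed.

Lemma plusF_cover_nbh S :
  is_vertex_cover (del_vertex e v) S -> nbh e v \subset S -> is_vertex_cover Gplus S.
Proof.
move=> coverS NvS; have /subsetP NvS' := NvS.
have /and4P[aS bS cS dS] : [&& a \in S, b \in S, c \in S & d \in S].
  by rewrite !NvS' // Nv !inE eqxx ?orbT.
apply/plusF_coverP; split=> //; first by move=> x y /NvS' -> .
  by rewrite subUset !sub1set aS bS.
by rewrite subUset !sub1set cS dS.
Qed.

Hypotheses (ab : e a b) (bc : e b c) (cd : e c d).

Lemma plusF_cover_of_cover S :
  is_vertex_cover e S -> exists2 S', is_vertex_cover Gplus S' & #|S'| <= #|S|.
Proof.
move=> coverS; have [av bv cv dv] := abcd_neq_v.
have [vS|vS] := boolP (v \in S); last first.
  exists S => //; apply: plusF_cover_nbh; first exact: del_vertex_cover.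
  exact: nbh_subset_cover.
have stays x y : y \in S -> y != v -> y \in x |: S :\ v.
  by move=> yS yv; rewrite !inE yv yS orbT.
have other_end x y : e x y -> x \notin S -> y \in S.
  by move=> /coverS/orP[->|].
have [aS|aS] := boolP (a \in S); last first.
  exists (a |: S :\ v); last exact: card_exchange.
  have [a' b'] : a \in a |: S :\ v /\ b \in a |: S :\ v.
    by rewrite setU11 stays // (other_end a).
  apply/plusF_coverP; split; first exact: del_vertex_cover_exchange.
  - rewrite Nv; apply: clique_cover4 => //.
    by case/orP: (coverS c d cd) => [cS|dS]; [rewrite (stays _ c) | rewrite (stays _ d) ?orbT].
  - by rewrite subUset !sub1set a' b'.
  - apply/orP; right; apply/subsetP => y /setD1P[yv ay]; apply: stays yv.
    by apply: other_end aS; rewrite inE in ay.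
have [dS|dS] := boolP (d \in S); last first.
  exists (d |: S :\ v); last exact: card_exchange.
  have [d' c'] : d \in d |: S :\ v /\ c \in d |: S :\ v.
    by rewrite setU11 stays // (other_end d) // e_sym.
  apply/plusF_coverP; split; first exact: del_vertex_cover_exchange.
  - have -> : nbh e v = [set d; c; b; a].
      apply/setP => u; rewrite Nv !inE.
      by case: (u == a); case: (u == b); case: (u == c); case: (u == d).
    by apply: clique_cover4 => //; rewrite (stays _ a) ?orbT.
  - apply/orP; right; apply/subsetP => y /setD1P[yv dy]; apply: stays yv.
    by apply: other_end dS; rewrite inE in dy.
  - by rewrite subUset !sub1set c' d'.
set x := if b \in S then c else b.
have [b' c'] : b \in x |: S :\ v /\ c \in x |: S :\ v.
  rewrite /x; case: ifP => bS; first by rewrite setU11 stays.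
  by rewrite setU11 stays // (other_end b) ?bS.
exists (x |: S :\ v); last exact: card_exchange.
apply: plusF_cover_nbh; first exact: del_vertex_cover_exchange.
by rewrite Nv !subUset !sub1set b' c' !stays.
Qed.

Hypothesis uniq_abcd : uniq [:: a; b; c; d].

Lemma cover_of_plusF_cover S :
  is_vertex_cover Gplus S -> exists2 S', is_vertex_cover e S' & #|S'| <= #|S|.
Proof.
case/plusF_coverP=> coverS cliqueS endab endcd.
have [NvS|/subsetPn[z zN zS]] := boolP (nbh e v \subset S).
  by exists S => //; apply: cover_of_del_cover_nbh coverS NvS.
have in_S x : x \in nbh e v -> x != z -> x \in S.
  by move=> xN xz; have := cliqueS x z xN zN xz; rewrite (negbTE zS) orbF.
have [aN dN] : a \in nbh e v /\ d \in nbh e v by rewrite Nv !inE !eqxx ?orbT.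
move: uniq_abcd; rewrite /= !inE !negb_or => /and4P[/and3P[_ ac' ad'] /andP[_ bd'] _ _].
have /orP[zab|zcd] : (z \in [set a; b]) || (z \in [set c; d]).
  by move: zN; rewrite Nv !inE -!orbA.
- have NdS : nbh e d :\ v \subset S.
    by case/orP: endab => // /subsetP abS; move: zS; rewrite abS.
  have dS : d \in S.
    by apply: in_S dN _; move: zab; rewrite !inE => /orP[]/eqP->; rewrite eq_sym.
  by exists (v |: S :\ d); [apply: cover_exchange coverS NdS | apply: card_exchange].
- have NaS : nbh e a :\ v \subset S.
    by case/orP: endcd => // /subsetP cdS; move: zS; rewrite cdS.
  have aS : a \in S by apply: in_S aN _; move: zcd; rewrite !inE => /orP[]/eqP->.
  by exists (v |: S :\ a); [apply: cover_exchange coverS NaS | apply: card_exchange].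
Qed.

End ReductionF.

Unset Implicit Arguments.

Theorem proposition7 (T : finType) (e : rel T) (k : int) (v : T) :
  simple_graph e -> condA e -> condB e ->
  #|nbh e v| = 4 -> 3 <= induced_edges e (nbh e v) ->
  is_path_graph_induced e (nbh e v) /\
  (forall a b c d : T, induced_P4 e (nbh e v) a b c d ->
     (has_vc e k <-> has_vc (Gprime_rel e v a b c d) k)).
Proof.
move=> [e_sym e_irr] hA hB deg4 edges3; split; first exact: nbh_induced_P4.
move=> a b c d [U Nv [ab bc cd] [ac ad bd]].
apply: (iff_trans _ (iff_sym (has_vc_Vminus (plusF e v a b c d) v k))).
split; apply: has_vc_transfer => S.
  exact: plusF_cover_of_cover.
exact: cover_of_plusF_cover.
Qed.
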